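(* Let $\varphi$ be any first-order formula in negation-normal form. Then $\varphi^N \rightarrow \varphi^{\mathit{awk}}$ is provable in minimal logic. Consequently, for formulas $\varphi$ in negation-normal form in the language of arithmetic, Peano arithmetic $\mathsf{PA}$ proves $\varphi$ if and only if $\mathsf{HA'}$ proves $\varphi^{\mathit{awk}}$.
   Context: Logical symbols are $\forall,\exists,\land,\lor,\rightarrow,\bot$, with $\lnot\varphi$ defined as $\varphi\rightarrow\bot$. Minimal logic is intuitionistic logic without ex falso (from $\bot$ infer anything). A formula is in negation-normal form if it is built from atomic and negated atomic formulas using $\land,\lor,\forall,\exists$. For such $\varphi$, the classical negation $\sim\varphi$ is obtained from $\varphi$ by exchanging $\land$ with $\lor$, $\forall$ with $\exists$, and each atomic formula with its negation (so $\sim\sim\varphi$ is $\varphi$). The awkward translation is $\varphi^{\mathit{awk}} := \lnot(\sim\varphi)$. The Gödel–Gentzen translation $\varphi^N$ is defined by: $\bot^N=\bot$; $\theta^N=\lnot\lnot\theta$ for atomic $\theta$; $(\varphi\land\psi)^N=\varphi^N\land\psi^N$; $(\varphi\lor\psi)^N=\lnot(\lnot\varphi^N\land\lnot\psi^N)$; $(\varphi\rightarrow\psi)^N=\varphi^N\rightarrow\psi^N$; $(\forall x\varphi)^N=\forall x\varphi^N$; $(\exists x\varphi)^N=\lnot\forall x\lnot\varphi^N$. $\mathsf{PA}$ is classical first-order arithmetic; $\mathsf{HA'}$ denotes Heyting arithmetic formulated over minimal logic (the language containing symbols for the primitive recursive functions, so that every negated atomic formula has an atomic equivalent). *)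

From Stdlib Require Import List.
From Stdlib Require Vector Fin.
Import ListNotations.

Set Implicit Arguments.

Record signature : Type := Sig {
  syms : Type;
  ar_syms : syms -> nat;
  preds : Type;
  ar_preds : preds -> nat
}.

Section FOL.
Context {S : signature}.

Inductive term : Type :=
| var : nat -> term
| func : forall f : syms S, Vector.t term (ar_syms S f) -> term.

Inductive form : Type :=
| fal : form
| atom : forall P : preds S, Vector.t term (ar_preds S P) -> form
| conj : form -> form -> form
| disj : form -> form -> form
| impl : form -> form -> form
| all : form -> form
| ex : form -> form.

Definition neg (A : form) : form := impl A fal.

Definition scons {X : Type} (x : X) (f : nat -> X) (n : nat) : X :=
  match n with 0 => x | Datatypes.S k => f k end.

Fixpoint subst_term (s : nat -> term) (t : term) : term :=
  match t with
  | var n => s n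
  | func f v => func f (Vector.map (subst_term s) v)
  end.

Definition shift : nat -> term := fun n => var (Datatypes.S n).

Definition up (s : nat -> term) : nat -> term :=
  scons (var 0) (fun n => subst_term shift (s n)).

Fixpoint subst_form (s : nat -> term) (A : form) : form :=
  match A with
  | fal => fal
  | atom P v => atom P (Vector.map (subst_term s) v)
  | conj A B => conj (subst_form s A) (subst_form s B)
  | disj A B => disj (subst_form s A) (subst_form s B)
  | impl A B => impl (subst_form s A) (subst_form s B)
  | all A => all (subst_form (up s) A)
  | ex A => ex (subst_form (up s) A)
  end.

Definition inst (t : term) (A : form) : form := subst_form (scons t var) A.

Inductive prv (c : bool) : list form -> form -> Prop :=
| Ctx G A : In A G -> prv c G A
| II G A B : prv c (A :: G) B -> prv c G (impl A B)
| IE G A B : prv c G (impl A B) -> prv c G A -> prv c G B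
| CI G A B : prv c G A -> prv c G B -> prv c G (conj A B)
| CE1 G A B : prv c G (conj A B) -> prv c G A
| CE2 G A B : prv c G (conj A B) -> prv c G B
| DI1 G A B : prv c G A -> prv c G (disj A B)
| DI2 G A B : prv c G B -> prv c G (disj A B)
| DE G A B C : prv c G (disj A B) -> prv c (A :: G) C -> prv c (B :: G) C ->
               prv c G C
| AllI G A : prv c (List.map (subst_form shift) G) A -> prv c G (all A)
| AllE G t A : prv c G (all A) -> prv c G (inst t A)
| ExI G t A : prv c G (inst t A) -> prv c G (ex A)
| ExE G A B : prv c G (ex A) ->
              prv c (A :: List.map (subst_form shift) G) (subst_form shift B) ->
              prv c G B
| DN G A : c = true -> prv c G (neg (neg A)) -> prv c G A.

Definition tprv (c : bool) (T : form -> Prop) (A : form) : Prop :=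
  exists G, (forall B, In B G -> T B) /\ prv c G A.

Definition minimal_prv (A : form) : Prop := prv false [] A.

Inductive nnf : form -> Prop :=
| nnf_atom P v : nnf (atom P v)
| nnf_natom P v : nnf (neg (atom P v))
| nnf_conj A B : nnf A -> nnf B -> nnf (conj A B)
| nnf_disj A B : nnf A -> nnf B -> nnf (disj A B)
| nnf_all A : nnf A -> nnf (all A)
| nnf_ex A : nnf A -> nnf (ex A).

(* classical negation ~phi for phi in NNF (its value on formulas that are
   not in NNF is irrelevant: it is only ever used on NNF formulas) *)
Fixpoint cneg (A : form) : form :=
  match A with
  | atom P v => neg (atom P v)
  | impl (atom P v) fal => atom P v
  | conj A B => disj (cneg A) (cneg B)
  | disj A B => conj (cneg A) (cneg B)
  | all A => ex (cneg A)
  | ex A => all (cneg A)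
  | B => B
  end.

Definition awk (A : form) : form := neg (cneg A).

Fixpoint gg (A : form) : form :=
  match A with
  | fal => fal
  | atom P v => neg (neg (atom P v))
  | conj A B => conj (gg A) (gg B)
  | disj A B => neg (conj (neg (gg A)) (neg (gg B)))
  | impl A B => impl (gg A) (gg B)
  | all A => all (gg A)
  | ex A => neg (all (neg (gg A)))
  end.

End FOL.

Arguments term : clear implicits.
Arguments form : clear implicits.

Inductive PR : nat -> Type :=
| PRzero : PR 0
| PRsucc : PR 1
| PRproj n : Fin.t n -> PR n
| PRcomp k n : PR k -> (Fin.t k -> PR n) -> PR n  (* f (g_1 x, ..., g_k x) *)
| PRrec n : PR n -> PR (Datatypes.S (Datatypes.S n)) -> PR (Datatypes.S n).
  (* R(0,x) = g(x),  R(y+1,x) = h(y, R(y,x), x) *)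

Definition arith_sig : signature :=
  {| syms := { n : nat & PR n };
     ar_syms := fun f => projT1 f;
     preds := unit;
     ar_preds := fun _ => 2 |}.

Definition aterm := term arith_sig.
Definition aform := form arith_sig.

Definition aeq (t s : aterm) : aform :=
  @atom arith_sig tt (Vector.cons _ t _ (Vector.cons _ s _ (Vector.nil _))).

Definition app {n : nat} (f : PR n) (v : Vector.t aterm n) : aterm :=
  @func arith_sig (existT _ n f) v.

Definition zero : aterm := app PRzero (Vector.nil _).
Definition succ (t : aterm) : aterm := app PRsucc (Vector.cons _ t _ (Vector.nil _)).

Fixpoint vars_from (k n : nat) : Vector.t aterm n :=
  match n with
  | 0 => Vector.nil _
  | Datatypes.S m => Vector.cons _ (@var arith_sig k) _ (vars_from (Datatypes.S k) m)
  end.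

Fixpoint vec_of_fun {X : Type} (k : nat) : (Fin.t k -> X) -> Vector.t X k :=
  match k with
  | 0 => fun _ => Vector.nil _
  | Datatypes.S m => fun g => Vector.cons _ (g Fin.F1) _ (@vec_of_fun X m (fun i => g (Fin.FS i)))
  end.

Inductive pr_eqn : aform -> Prop :=
| eqn_proj n (i : Fin.t n) :
    pr_eqn (aeq (app (PRproj i) (vars_from 0 n)) (@var arith_sig (proj1_sig (Fin.to_nat i))))
| eqn_comp k n (f : PR k) (g : Fin.t k -> PR n) :
    pr_eqn (aeq (app (PRcomp f g) (vars_from 0 n))
                (app f (@vec_of_fun aterm k (fun i => app (g i) (vars_from 0 n)))))
| eqn_rec0 n (g : PR n) (h : PR (Datatypes.S (Datatypes.S n))) :
    pr_eqn (aeq (app (PRrec g h) (Vector.cons _ zero _ (vars_from 0 n)))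
                (app g (vars_from 0 n)))
| eqn_recS n (g : PR n) (h : PR (Datatypes.S (Datatypes.S n))) :
    pr_eqn (aeq (app (PRrec g h) (Vector.cons _ (succ (@var arith_sig 0)) _ (vars_from 1 n)))
                (app h (Vector.cons _ (@var arith_sig 0) _
                        (Vector.cons _ (app (PRrec g h)
                                          (Vector.cons _ (@var arith_sig 0) _ (vars_from 1 n))) _
                                     (vars_from 1 n))))).

(* substitutions used to state the equality (Leibniz) schema:
   A(x) with x := var 0 resp. var 1, other free variables moved past 0,1 *)
Definition sub_at (k : nat) : nat -> aterm :=
  scons (@var arith_sig k) (fun n => @var arith_sig (Datatypes.S (Datatypes.S n))).

(* the (open) axioms of arithmetic; free variables are read universally,
   realised by closing the axiom set under substitution below *)
Inductive arith_ax : aform -> Prop :=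
| ax_refl : arith_ax (aeq (@var arith_sig 0) (@var arith_sig 0))
| ax_leibniz (A : aform) :
    arith_ax (impl (aeq (@var arith_sig 0) (@var arith_sig 1))
                   (impl (subst_form (sub_at 0) A) (subst_form (sub_at 1) A)))
| ax_succ_ne_zero : arith_ax (neg (aeq (succ (@var arith_sig 0)) zero))
| ax_succ_inj :
    arith_ax (impl (aeq (succ (@var arith_sig 0)) (succ (@var arith_sig 1)))
                   (aeq (@var arith_sig 0) (@var arith_sig 1)))
| ax_pr A : pr_eqn A -> arith_ax A
| ax_ind (A : aform) :
    arith_ax (impl (inst zero A)
               (impl (all (impl A (subst_form (scons (succ (@var arith_sig 0)) shift) A)))
                     (all A))).

Definition arith_axioms (A : aform) : Prop :=
  exists B s, arith_ax B /\ A = subst_form s B.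

Definition PA_prv (A : aform) : Prop := tprv true arith_axioms A.
Definition HA'_prv (A : aform) : Prop := tprv false arith_axioms A.

(** [gg A -> ¬ ~A] is proved by induction on the negation normal form [A]: for
    literals it is double or triple negation introduction, and each connective of
    [gg A] is precisely what refutes the dual connective of [~A].  The same
    induction shows, classically, [¬A -> ~A], hence [¬ ~A -> A].
    For arithmetic, a PA-proof of [A] yields an HA'-proof of [gg A] by soundness of
    the Gödel-Gentzen translation, because the translated axioms are HA'-provable:
    they are double-negation weakenings of axioms, or instances of the equality and
    induction schemes for translated formulas.  Hence HA' proves [¬ ~A].  Conversely
    an HA'-proof of [¬ ~A] is a PA-proof, and [¬ ~A -> A] holds classically. *)

From Stdlib Require Import List.
Import ListNotations.

Set Implicit Arguments.

Section Substitution.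
Context {S : signature}.

Fixpoint term_ind_forall (P : term S -> Prop) (Hvar : forall n, P (var n))
  (Hfunc : forall f v, Vector.Forall P v -> P (func f v)) (t : term S) : P t :=
  match t with
  | var n => Hvar n
  | func f v => Hfunc f v ((fix args n (w : Vector.t (term S) n) : Vector.Forall P w :=
       match w with
       | Vector.nil _ => Vector.Forall_nil P
       | Vector.cons _ x _ w' =>
           Vector.Forall_cons P x w' (term_ind_forall Hvar Hfunc x) (args _ w')
       end) _ v)
  end.

Lemma term_ind_in (P : term S -> Prop) (Hvar : forall n, P (var n))
  (Hfunc : forall f v, (forall t, Vector.In t v -> P t) -> P (func f v)) :
  forall t, P t.
Proof.
  apply term_ind_forall; [exact Hvar|].
  intros f v Hv. apply Hfunc, Vector.Forall_forall, Hv.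
Qed.

Lemma subst_term_ext (s s' : nat -> term S) t :
  (forall n, s n = s' n) -> subst_term s t = subst_term s' t.
Proof.
  intros H. induction t as [n|f v IH] using term_ind_in; simpl; [apply H|].
  f_equal. apply Vector.map_ext_in, IH.
Qed.

Lemma subst_term_comp (s s' : nat -> term S) t :
  subst_term s (subst_term s' t) = subst_term (fun n => subst_term s (s' n)) t.
Proof.
  induction t as [n|f v IH] using term_ind_in; simpl; [reflexivity|].
  f_equal. rewrite Vector.map_map. apply Vector.map_ext_in, IH.
Qed.

Lemma subst_term_var t : subst_term (@var S) t = t.
Proof.
  induction t as [n|f v IH] using term_ind_in; simpl; [reflexivity|].
  f_equal. rewrite <- (Vector.map_id _ _ v) at 2. apply Vector.map_ext_in, IH.
Qed.

Lemma up_ext (s s' : nat -> term S) :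
  (forall n, s n = s' n) -> forall n, up s n = up s' n.
Proof. intros H [|n]; simpl; [reflexivity|]. now rewrite H. Qed.

Lemma subst_form_ext A : forall s s' : nat -> term S,
  (forall n, s n = s' n) -> subst_form s A = subst_form s' A.
Proof.
  induction A; intros s s' H; simpl; f_equal; auto using up_ext.
  apply Vector.map_ext. intros u. now apply subst_term_ext.
Qed.

Lemma subst_form_comp A : forall s s' : nat -> term S,
  subst_form s (subst_form s' A) = subst_form (fun n => subst_term s (s' n)) A.
Proof.
  induction A; intros s s'; simpl; f_equal; auto.
  1: rewrite Vector.map_map; apply Vector.map_ext; intros u; apply subst_term_comp.
  all: rewrite IHA; apply subst_form_ext; intros [|n]; simpl; [reflexivity|];
       rewrite !subst_term_comp; reflexivity.
Qed.

Lemma subst_form_var A : forall s : nat -> term S,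
  (forall n, s n = var n) -> subst_form s A = A.
Proof.
  induction A as [|P v| | | | |]; intros s H; simpl; f_equal; auto.
  1: rewrite <- (Vector.map_id _ _ v) at 2; apply Vector.map_ext; intros u;
     rewrite (subst_term_ext s var u H); apply subst_term_var.
  all: apply IHA; intros [|n]; simpl; [reflexivity|]; now rewrite H.
Qed.

Lemma inst_var0_up_shift (A : form S) : inst (var 0) (subst_form (up shift) A) = A.
Proof.
  unfold inst. rewrite subst_form_comp. apply subst_form_var. now intros [|n].
Qed.

End Substitution.

(* Uses the first context entry that unifies with the goal, so under [eapply IE]
   the implication must be given explicitly when an earlier entry also fits. *)
Ltac hyp := apply Ctx; simpl; solve [repeat first [left; reflexivity | right]].

Section Derivations.
Context {S : signature}.
Implicit Types (A B C : form S) (G : list (form S)).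

Lemma prv_weaken c G A : prv c G A -> forall G', incl G G' -> prv c G' A.
Proof.
  assert (incl_cons_cons : forall B G G', incl G G' -> incl (B :: G) (B :: G'))
    by (intros B G0 G0' H; apply incl_cons; [left | apply incl_tl]; auto).
  induction 1; intros G' HG; solve [econstructor; eauto using incl_map].
Qed.

Lemma prv_cons c G A B : prv c G A -> prv c (B :: G) A.
Proof. intros H. apply (prv_weaken H). apply incl_tl, incl_refl. Qed.

Lemma prv_of_minimal c G A : prv false G A -> prv c G A.
Proof. induction 1; try discriminate; solve [econstructor; eauto]. Qed.

Lemma prv_all_var0 c G A : prv c G (all (subst_form (up shift) A)) -> prv c G A.
Proof. intros H. rewrite <- inst_var0_up_shift. now apply AllE. Qed.

Lemma prv_ex_var0 c G A : prv c G A -> prv c G (ex (subst_form (up shift) A)).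
Proof. intros H. apply ExI with (var 0). now rewrite inst_var0_up_shift. Qed.

Lemma prv_dni c G A : prv c G A -> prv c G (neg (neg A)).
Proof. intros HA. apply II. eapply IE; [hyp | now apply prv_cons]. Qed.

End Derivations.

Section NegationNormalForm.
Context {S : signature}.
Implicit Types (A B C : form S) (G : list (form S)).

Lemma prv_gg_awk A G : nnf A -> prv false G (impl (gg A) (awk A)).
Proof.
  unfold awk. intros HA. revert G.
  induction HA as [P v|P v|A B _ IHA _ IHB|A B _ IHA _ IHB|A _ IHA|A _ IHA];
    intros G; simpl; apply II; [hyp|apply II ..].
  - eapply IE; [hyp|]. apply II. eapply IE; hyp.
  - eapply DE; [hyp| |].
    + eapply IE; [eapply IE; [apply IHA| eapply CE1; hyp] | hyp].
    + eapply IE; [eapply IE; [apply IHB| eapply CE2; hyp] | hyp].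
  - eapply IE; [hyp|]. apply CI.
    + apply II. eapply IE; [eapply IE; [apply IHA| hyp] | eapply CE1; hyp].
    + apply II. eapply IE; [eapply IE; [apply IHB| hyp] | eapply CE2; hyp].
  - eapply ExE with (B := fal); [hyp|]. simpl.
    eapply IE; [eapply IE; [apply IHA| apply prv_all_var0; hyp] | hyp].
  - eapply IE; [hyp|]. apply AllI. simpl. apply II.
    eapply IE; [eapply IE; [apply IHA| hyp] | apply prv_all_var0; hyp].
Qed.

Lemma prv_classical_contra A C :
  (forall G, prv true G (impl (neg A) C)) -> forall G, prv true G (impl (neg C) A).
Proof.
  intros H G. apply II, DN; [reflexivity|]. apply II.
  apply (IE (A := C)); [hyp|]. eapply IE; [apply H | hyp].
Qed.

Lemma prv_classical_neg_cneg A G : nnf A -> prv true G (impl (neg A) (cneg A)).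
Proof.
  intros HA. revert G.
  induction HA as [P v|P v|A B _ IHA _ IHB|A B _ IHA _ IHB|A _ IHA|A _ IHA];
    intros G; simpl; apply II.
  - hyp.
  - apply DN; [reflexivity | hyp].
  - apply DN; [reflexivity|]. apply II. apply (IE (A := conj A B)); [hyp|]. apply CI.
    + eapply IE; [apply (prv_classical_contra IHA)|].
      apply II. eapply IE; [hyp|]. apply DI1. hyp.
    + eapply IE; [apply (prv_classical_contra IHB)|].
      apply II. eapply IE; [hyp|]. apply DI2. hyp.
  - apply CI.
    + eapply IE; [apply IHA|]. apply II. eapply IE; [hyp|]. apply DI1. hyp.
    + eapply IE; [apply IHB|]. apply II. eapply IE; [hyp|]. apply DI2. hyp.
  - apply DN; [reflexivity|]. apply II. apply (IE (A := all A)); [hyp|].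
    apply AllI. simpl.
    eapply IE; [apply (prv_classical_contra IHA)|].
    apply II. eapply IE; [hyp|]. apply prv_ex_var0. hyp.
  - apply AllI. simpl. eapply IE; [apply IHA|].
    apply II. eapply IE; [hyp|]. apply prv_ex_var0. hyp.
Qed.

Lemma prv_classical_awk_elim A G : nnf A -> prv true G (impl (awk A) A).
Proof.
  intros HA. apply prv_classical_contra. intros G'. now apply prv_classical_neg_cneg.
Qed.

End NegationNormalForm.

Section GodelGentzen.
Context {S : signature}.
Implicit Types (A B C : form S) (G : list (form S)).

Lemma gg_subst A : forall s, gg (subst_form s A) = subst_form s (gg A).
Proof. induction A; intros s; simpl; rewrite ?IHA, ?IHA1, ?IHA2; reflexivity. Qed.

Lemma prv_neg_stable c G A : prv c G (impl (neg (neg (neg A))) (neg A)).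
Proof.
  apply II, II. apply (IE (A := neg (neg A))); [hyp|].
  apply II. eapply IE; hyp.
Qed.

(* Negations and [fal] are stable, and [conj], [impl], [all] preserve stability. *)
Lemma prv_gg_stable A G : prv false G (impl (neg (neg (gg A))) (gg A)).
Proof.
  revert G. induction A; intros G; simpl; try apply prv_neg_stable.
  - apply II. eapply IE; [hyp|]. apply II. hyp.
  - apply II, CI.
    + eapply IE; [apply IHA1|]. apply II.
      apply (IE (A := neg (conj (gg A1) (gg A2)))); [hyp|].
      apply II. apply (IE (A := gg A1)); [hyp|]. eapply CE1; hyp.
    + eapply IE; [apply IHA2|]. apply II.
      apply (IE (A := neg (conj (gg A1) (gg A2)))); [hyp|].
      apply II. apply (IE (A := gg A2)); [hyp|]. eapply CE2; hyp.
  - apply II, II. eapply IE; [apply IHA2|]. apply II.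
    apply (IE (A := neg (gg (impl A1 A2)))); [hyp|]. apply II.
    apply (IE (A := gg A2)); [hyp|]. eapply IE; hyp.
  - apply II, AllI. simpl. eapply IE; [apply IHA|]. apply II.
    apply (IE (A := neg (all (subst_form (up shift) (gg A))))); [hyp|]. apply II.
    apply (IE (A := gg A)); [hyp|]. apply prv_all_var0. hyp.
Qed.

Lemma prv_gg_dn G A : prv false G (neg (neg (gg A))) -> prv false G (gg A).
Proof. apply IE, prv_gg_stable. Qed.

Lemma prv_gg_dn_hyp G e A :
  prv false G (impl e (gg A)) -> prv false G (impl (neg (neg e)) (gg A)).
Proof.
  intros H. apply II, prv_gg_dn, II. apply (IE (A := neg e)); [hyp|].
  apply II. apply (IE (A := gg A)); [hyp|]. eapply IE; [|hyp].
  apply (prv_weaken H). do 3 apply incl_tl. apply incl_refl.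
Qed.

Lemma map_gg_shift G :
  map (subst_form shift) (map gg G) = map gg (map (subst_form shift) G).
Proof. rewrite !map_map. apply map_ext. intros A. symmetry. apply gg_subst. Qed.

Lemma gg_sound c G A : prv c G A -> prv false (map gg G) (gg A).
Proof.
  induction 1; simpl in *; unfold inst in *; rewrite ?gg_subst in *.
  - apply Ctx, in_map. assumption.
  - apply II. assumption.
  - eapply IE; eassumption.
  - apply CI; assumption.
  - eapply CE1; eassumption.
  - eapply CE2; eassumption.
  - apply II. eapply IE; [eapply CE1; hyp | apply prv_cons; assumption].
  - apply II. eapply IE; [eapply CE2; hyp | apply prv_cons; assumption].
  - apply prv_gg_dn, II. eapply IE; [apply prv_cons; eassumption|]. apply CI.
    + apply II. apply (IE (A := gg C)); [hyp|].
      apply (prv_weaken IHprv2). intros D [<-|HD]; simpl; auto.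
    + apply II. apply (IE (A := gg C)); [hyp|].
      apply (prv_weaken IHprv3). intros D [<-|HD]; simpl; auto.
  - apply AllI. rewrite map_gg_shift. assumption.
  - apply (AllE t) in IHprv. unfold inst in IHprv. assumption.
  - apply II.
    apply (IE (A := subst_form (scons t var) (gg A))); [| apply prv_cons; assumption].
    exact (AllE t (A := neg (gg A)) (Ctx _ _ _ (in_eq _ _))).
  - apply prv_gg_dn, II. eapply IE; [apply prv_cons; eassumption|]. apply AllI. simpl.
    apply II. apply (IE (A := subst_form shift (gg B))); [hyp|].
    rewrite map_gg_shift. apply (prv_weaken IHprv2). intros D [<-|HD]; simpl; auto.
  - apply prv_gg_dn. assumption.
Qed.

End GodelGentzen.

Section Theories.
Context {S : signature}.
Implicit Types (A B : form S) (G : list (form S)) (T : form S -> Prop).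

Lemma tprv_of_axiom {c T A B} : T B -> prv c [B] A -> tprv c T A.
Proof. intros HB HA. exists [B]. split; [intros D [<-|[]]; exact HB | exact HA]. Qed.

Lemma tprv_axiom c T A : T A -> tprv c T A.
Proof. intros HA. apply (tprv_of_axiom HA). hyp. Qed.

Lemma tprv_cut c T G A :
  prv c G A -> (forall B, In B G -> tprv c T B) -> tprv c T A.
Proof.
  revert A. induction G as [|B G IH]; intros A HA HG.
  - exists []. split; [intros ? []| exact HA].
  - destruct (IH (impl B A) (II HA)) as [L1 [HL1 P1]]; [intros; apply HG; now right|].
    destruct (HG B (in_eq _ _)) as [L2 [HL2 P2]].
    exists (L1 ++ L2). split.
    + intros D HD. apply in_app_or in HD as [HD|HD]; auto.
    + eapply IE; eapply prv_weaken; eauto using incl_appl, incl_appr, incl_refl.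
Qed.

Lemma tprv_mp c T A B :
  (forall G, prv c G (impl A B)) -> tprv c T A -> tprv c T B.
Proof.
  intros HAB [G [HG HA]]. exists G. split; [exact HG|]. eapply IE; [apply HAB | exact HA].
Qed.

Lemma tprv_of_minimal c T A : tprv false T A -> tprv c T A.
Proof. intros [G [HG HA]]. exists G. split; [exact HG | now apply prv_of_minimal]. Qed.

End Theories.

Lemma pr_eqn_atom A : pr_eqn A -> exists t u, A = aeq t u.
Proof. destruct 1; eexists; eexists; reflexivity. Qed.

Lemma HA'_prv_gg_axiom A : arith_axioms A -> HA'_prv (gg A).
Proof.
  intros [B [s [HB ->]]]. rewrite gg_subst.
  assert (Hax : arith_axioms (subst_form s B)) by (exists B, s; auto).
  destruct HB as [ | C | | | B HB | C].
  - apply (tprv_of_axiom Hax). apply prv_dni. hyp.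
  - apply (tprv_of_axiom (B := subst_form s (impl (aeq (var 0) (var 1))
             (impl (subst_form (sub_at 0) (gg C)) (subst_form (sub_at 1) (gg C))))));
      [eexists; exists s; split; [constructor | reflexivity]|].
    simpl. rewrite <- !gg_subst. apply (prv_gg_dn_hyp (impl _ _)).
    simpl. rewrite !gg_subst. hyp.
  - apply (tprv_of_axiom Hax). apply (prv_gg_dn_hyp fal). hyp.
  - apply (tprv_of_axiom Hax). apply (prv_gg_dn_hyp (aeq _ _)).
    apply II, prv_dni. eapply IE; hyp.
  - destruct (pr_eqn_atom HB) as [t [u ->]].
    apply (tprv_of_axiom Hax). apply prv_dni. hyp.
  - apply tprv_axiom. eexists; exists s; split; [|reflexivity].
    simpl. unfold inst. rewrite !gg_subst. exact (ax_ind (gg C)).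
Qed.

Theorem theorem4 :
  (forall (S : signature) (phi : form S),
      nnf phi -> minimal_prv (impl (gg phi) (awk phi))) /\
  (forall phi : aform, nnf phi -> (PA_prv phi <-> HA'_prv (awk phi))).
Proof.
  split.
  - intros S phi Hphi. exact (prv_gg_awk [] Hphi).
  - intros phi Hphi. split.
    + intros [G [HG Hprv]]. apply (tprv_mp (fun G => prv_gg_awk G Hphi)).
      apply (tprv_cut (gg_sound Hprv)). intros B HB.
      apply in_map_iff in HB as [A [<- HA]]. exact (HA'_prv_gg_axiom (HG A HA)).
    + intros Hawk. apply (tprv_mp (fun G => prv_classical_awk_elim G Hphi)).
      now apply tprv_of_minimal.
Qed.
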